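(* For $n\ge 1$, $$(\mathfrak C_0+\mathfrak C_0+\mathfrak C_0)^n=(2n-1)(n-1)\mathfrak C_{2n}+n(2n-1)(2n-3)^2\mathfrak C_{2n-2}.$$
   Context: The numbers $\mathfrak C_{2n}$ (Cauchy numbers with level $2$) are defined by $\frac{t}{{\rm arcsinh}\,t}=\sum_{n=0}^\infty\mathfrak C_{2n}\frac{t^{2n}}{(2n)!}$. Convolution notation: $(\mathfrak C_{2j_1}+\cdots+\mathfrak C_{2j_k})^n:=\sum_{i_1+\cdots+i_k=n,\ i_1,\dots,i_k\ge0}\frac{(2n)!}{(2i_1)!\cdots(2i_k)!}\mathfrak C_{2i_1+2j_1}\cdots\mathfrak C_{2i_k+2j_k}$. *)

From mathcomp Require Import all_boot all_algebra.
Set Implicit Arguments. Unset Strict Implicit. Unset Printing Implicit Defensive.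
Import GRing.Theory.
Local Open Scope ring_scope.

(* Coefficient of t^(2k+1) in arcsinh t, i.e. of t^(2k) in arcsinh(t)/t:
   (-1)^k (2k)! / (4^k (k!)^2 (2k+1)). *)
Definition asinh_coef (k : nat) : rat :=
  (-1) ^+ k * ((2 * k)`!)%:R / ((4 ^ k * (k`!) ^ 2 * (2 * k + 1))%N)%:R.

(* C n stands for the level-2 Cauchy number C_{2n}, i.e.
   t / arcsinh t = sum_n C n * t^(2n) / (2n)!  as formal power series,
   equivalently (arcsinh t / t) * (sum_n C n t^(2n)/(2n)!) = 1. *)
Definition cauchy2 (C : nat -> rat) : Prop :=
  forall n : nat,
    \sum_(k < n.+1) asinh_coef k * C (n - k)%N / ((2 * (n - k))`!)%:R
    = (n == 0%N)%:R.

From HB Require Import structures.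
From mathcomp Require Import all_boot all_algebra.
From mathcomp Require Import ring lra zify.
Set Implicit Arguments.
Unset Strict Implicit.
Unset Printing Implicit Defensive.
Import GRing.Theory Num.Theory.
Local Open Scope ring_scope.

(* Write arcsinh(t)/t = H(t^2) and t/arcsinh(t) = F(t^2), so that F H = 1, and let
   θ = x d/dx.  Then G = 2θH + H satisfies G(t^2) = (t H(t^2))' = 1/sqrt(1+t^2), i.e.
   2(1+x)θG + xG = 0 and (1+x)G^2 = 1.  Eliminating H and G from these relations
   and F H = 1 yields the Riccati-type equation
     4(1+x)θ^2F - (6+4x)θF + (2+x)F = 2F^3,
   and since (2n)! [x^n] F^3 is the convolution (C_0 + C_0 + C_0)^n, comparing the
   coefficients of x^n gives the identity.  Power series are represented by
   polynomials and equations between them are read modulo x^N. *)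

HB.lock Definition euler (R : nzRingType) (p : {poly R}) := 'X * p^`().

Section EulerOperator.
Variable R : fieldType.
Implicit Types p q : {poly R}.

Lemma coef_euler p k : (euler p)`_k = p`_k *+ k.
Proof. by rewrite euler.unlock coefXM coef_deriv; case: k => [|k] //=; rewrite mulr0n. Qed.

Lemma eulerD p q : euler (p + q) = euler p + euler q.
Proof. by rewrite euler.unlock derivD mulrDr. Qed.

Lemma eulerN p : euler (- p) = - euler p.
Proof. by rewrite euler.unlock derivN mulrN. Qed.

Lemma eulerMn p n : euler (p *+ n) = euler p *+ n.
Proof. by rewrite euler.unlock derivMn mulrnAr. Qed.

Lemma eulerM p q : euler (p * q) = euler p * q + p * euler q.
Proof. by rewrite euler.unlock derivM; ring. Qed.

Lemma euler1 : euler (1 : {poly R}) = 0.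
Proof. by rewrite euler.unlock derivC mulr0. Qed.

Lemma eulerX : euler ('X : {poly R}) = 'X.
Proof. by rewrite euler.unlock derivX mulr1. Qed.

Lemma dvdp_XnP N p : reflect (forall k, (k < N)%N -> p`_k = 0) ('X^N %| p).
Proof.
apply: (iffP (modp_eq0P _ _)); rewrite -Pdiv.IdomainMonic.take_poly_modp.
  by move=> p0 k ltkN; have := coef_take_poly N p k; rewrite p0 coef0 ltkN.
by move=> p0; apply/polyP => k; rewrite coef_take_poly coef0; case: ifP => // /p0.
Qed.

Lemma dvdp_Xn_euler N p : 'X^N %| p -> 'X^N %| euler p.
Proof. by move=> /dvdp_XnP p0; apply/dvdp_XnP => k /p0 pk0; rewrite coef_euler pk0 mul0rn. Qed.

Lemma dvdp_Xn_euler_const N p : has_pchar0 R ->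
  'X^N %| euler p -> 'X^N %| p - (p`_0)%:P.
Proof.
move=> /pcharf0P char0 /dvdp_XnP ep0; apply/dvdp_XnP => -[|k] ltkN.
  by rewrite coefB coefC subrr.
have /eqP := ep0 _ ltkN; rewrite coefB coefC subr0 coef_euler -mulr_natr.
by rewrite mulf_eq0 char0 orbF => /eqP.
Qed.

Section Reciprocal.
Variables (N : nat) (H F : {poly R}).
Hypothesis HF1 : 'X^N %| H * F - 1.

Lemma dvdp_Xn_euler_inv : 'X^N %| euler F + F ^+ 2 * euler H.
Proof.
have -> : euler F + F ^+ 2 * euler H = F * euler (H * F - 1) - euler F * (H * F - 1).
  by rewrite eulerD eulerN euler1 eulerM; ring.
by apply: dvdp_sub; apply: dvdp_mull => //; apply: dvdp_Xn_euler.
Qed.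

Lemma dvdp_Xn_euler2_inv :
  'X^N %| euler (euler F) + F ^+ 2 * euler (euler H) - F ^+ 3 * euler H ^+ 2 *+ 2.
Proof.
have -> : euler (euler F) + F ^+ 2 * euler (euler H) - F ^+ 3 * euler H ^+ 2 *+ 2
    = euler (euler F + F ^+ 2 * euler H) - F * euler H *+ 2 * (euler F + F ^+ 2 * euler H).
  by rewrite eulerD eulerM [F ^+ 2]expr2 !eulerM; ring.
by apply: dvdp_sub; [apply: dvdp_Xn_euler|apply: dvdp_mull]; apply: dvdp_Xn_euler_inv.
Qed.

End Reciprocal.
End EulerOperator.

Lemma big_ord_addn_eq (R : nmodType) n c (g : nat -> R) :
  \sum_(k < n.+1 | (c + k == n)%N) g k = if (c <= n)%N then g (n - c)%N else 0.
Proof.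
case: leqP => [lecn | ltnc]; last by rewrite big_pred0 // => k; apply/eqP; lia.
have ltn1 : (n - c < n.+1)%N by rewrite ltnS leq_subr.
rewrite (big_pred1 (Ordinal ltn1)) // => k /=.
by apply/eqP/eqP => [eqn | ->]; [apply: val_inj => /=; lia | rewrite subnKC].
Qed.

Lemma coef_poly_cube (R : nzSemiRingType) (f : nat -> R) N n : (n < N)%N ->
  ((\poly_(k < N) f k) ^+ 3)`_n =
  \sum_(i < n.+1) \sum_(j < n.+1) \sum_(k < n.+1 | (i + j + k == n)%N) f i * f j * f k.
Proof.
move=> ltnN; set p := \poly_(k < N) f k.
have coefp k : (k <= n)%N -> p`_k = f k.
  by move=> lekn; rewrite coef_poly (leq_ltn_trans lekn ltnN).
rewrite exprS expr2 coefM; apply: eq_bigr => -[i /= ltin] _.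
rewrite coefM big_distrr (big_ord_widen n.+1 (fun j => p`_i * (p`_j * p`_(n - i - j))))
  ?ltnS ?leq_subr // big_mkcond.
apply: eq_bigr => -[j /= ltjn] _.
rewrite (big_ord_addn_eq n (i + j) (fun k => f i * f j * f k)).
have -> : (j < (n - i).+1)%N = (i + j <= n)%N by lia.
case: ifP => // leijn; rewrite !coefp ?mulrA ?subnDA //; lia.
Qed.

Lemma natr_fact_neq0 (R : numDomainType) n : (n`!)%:R != 0 :> R.
Proof. by rewrite pnatr_eq0 -lt0n fact_gt0. Qed.

Lemma asinh_coef0 : asinh_coef 0 = 1.
Proof. by rewrite /asinh_coef /= expr0 mul1r muln0. Qed.

Lemma asinh_coefS k :
  (2 * k%:R + 2) * (2 * k%:R + 3) * asinh_coef k.+1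
  = - ((2 * k%:R + 1) ^+ 2 * asinh_coef k).
Proof.
rewrite /asinh_coef.
have -> : (2 * k.+1)`! = ((2 * k).+2 * (2 * k).+1 * (2 * k)`!)%N.
  by rewrite mulnS add2n !factS mulnA.
have -> : (2 * k.+1 + 1 = (2 * k + 1) + 2)%N by lia.
rewrite factS expnS -(addn2 (2 * k)) -(addn1 (2 * k)) -(addn1 k).
rewrite !(natrM, natrD, exprS, expr0, mulr1) exprD expr1.
have k0 : 0 <= k%:R :> rat by apply: ler0n.
have f4 : (4 ^ k)%:R != 0 :> rat by rewrite pnatr_eq0 -lt0n expn_gt0.
have k1 : k%:R + 1 != 0 :> rat by rewrite lt0r_neq0 //; lra.
have k21 : 2 * k%:R + 1 != 0 :> rat by rewrite lt0r_neq0 //; lra.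
have k23 : 2 * k%:R + 1 + 2 != 0 :> rat by rewrite lt0r_neq0 //; lra.
by field; rewrite natr_fact_neq0 f4 k1 k21 k23.
Qed.

Definition asinh_poly N : {poly rat} := \poly_(k < N) asinh_coef k.

Definition asinh_deriv_poly N : {poly rat} :=
  \poly_(k < N) ((2 * k%:R + 1) * asinh_coef k).

Lemma asinh_deriv_polyE N :
  asinh_deriv_poly N = euler (asinh_poly N) *+ 2 + asinh_poly N.
Proof.
apply/polyP => k; rewrite coefD coefMn coef_euler !coef_poly.
by case: ifP => _; ring.
Qed.

Lemma asinh_deriv_ode N :
  'X^N %| (1 + 'X) * euler (asinh_deriv_poly N) *+ 2 + 'X * asinh_deriv_poly N.
Proof.
apply/dvdp_XnP => -[|k] ltkN;
  rewrite !(mulrDl, mul1r, coefD, coefMn, coefXM, coef_euler) /=.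
  by rewrite !mulr0n !addr0.
rewrite !coef_poly ltkN ltnW //.
rewrite -[RHS](addNr ((2 * k%:R + 1) ^+ 2 * asinh_coef k)) -asinh_coefS.
ring.
Qed.

Lemma asinh_deriv_sqr N : 'X^N %| (1 + 'X) * asinh_deriv_poly N ^+ 2 - 1.
Proof.
case: N => [|N]; first by rewrite expr0 dvd1p.
set G := asinh_deriv_poly N.+1.
have G0 : G`_0 = 1 by rewrite coef_poly /= asinh_coef0; ring.
have /(dvdp_Xn_euler_const (@pchar_num _)) : 'X^(N.+1) %| euler ((1 + 'X) * G ^+ 2).
  have -> : euler ((1 + 'X) * G ^+ 2) = G * ((1 + 'X) * euler G *+ 2 + 'X * G).
    by rewrite eulerM eulerD euler1 eulerX expr2 eulerM; ring.
  exact/dvdp_mull/asinh_deriv_ode.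
by rewrite coef0M !coefD coef1 coefX coef0M G0 addr0 mulr1.
Qed.

Section Cauchy2.
Variables (C : nat -> rat) (N : nat).
Hypothesis hC : cauchy2 C.

Definition cauchy2_poly : {poly rat} := \poly_(k < N) (C k / ((2 * k)`!)%:R).
Let F := cauchy2_poly.

Lemma cauchy2_poly_inv : 'X^N %| asinh_poly N * F - 1.
Proof.
apply/dvdp_XnP => k ltkN; rewrite coefB coef1 coefM -(hC k).
apply/eqP; rewrite subr_eq0; apply/eqP/eq_bigr => i _; have lei := leq_ord i.
by rewrite !coef_poly (leq_ltn_trans lei) ?(leq_ltn_trans (leq_subr _ _)) ?mulrA.
Qed.

Lemma cauchy2_poly_ode :
  'X^N %| (1 + 'X) * euler (euler F) *+ 4 - (6 + 'X *+ 4) * euler F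
          + (2 + 'X) * F - F ^+ 3 *+ 2.
Proof.
set H := asinh_poly N.
have HF1 := cauchy2_poly_inv.
have dF := dvdp_Xn_euler_inv HF1.
have d2F := dvdp_Xn_euler2_inv HF1.
have odeG := asinh_deriv_ode N.
have sqrG := asinh_deriv_sqr N.
rewrite asinh_deriv_polyE -/H in odeG sqrG.
(* Substitute θF = -F^2 θH and θ^2F = 2F^3 (θH)^2 - F^2 θ^2H, eliminate θ^2H with the
   equation of G, then use (1+x)G^2 = 1 and FH = 1. *)
have -> : (1 + 'X) * euler (euler F) *+ 4 - (6 + 'X *+ 4) * euler F
          + (2 + 'X) * F - F ^+ 3 *+ 2
  = (1 + 'X) *+ 4 * (euler (euler F) + F ^+ 2 * euler (euler H) - F ^+ 3 * euler H ^+ 2 *+ 2)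
    + (- (6 + 'X *+ 4)) * (euler F + F ^+ 2 * euler H)
    + (- F ^+ 2) * ((1 + 'X) * euler (euler H *+ 2 + H) *+ 2 + 'X * (euler H *+ 2 + H))
    + F ^+ 3 *+ 2 * ((1 + 'X) * (euler H *+ 2 + H) ^+ 2 - 1)
    + (- F * (4 + 'X *+ 3 + (1 + 'X) * (H * F - 1) *+ 2 + (1 + 'X) * F * euler H *+ 8))
      * (H * F - 1).
  by rewrite eulerD eulerMn; ring.
by do 4?apply: dvdp_add; apply: dvdp_mull.
Qed.

Lemma coef_cauchy2_poly_cube m : (m.+1 < N)%N ->
  (F ^+ 3)`_m.+1 = (2 * m%:R + 1) * m%:R * (C m.+1 / ((2 * m.+1)`!)%:R)
                   + (2 * m%:R - 1) ^+ 2 / 2 * (C m / ((2 * m)`!)%:R).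
Proof.
move=> ltmN; have /dvdp_XnP/(_ _ ltmN) E := cauchy2_poly_ode.
rewrite !(mulrDl, mul1r, mulr_natl, mulrnAl, coefB, coefD, coefN, coefMn) in E.
rewrite !coefXM !coef_euler /= !coef_poly ltmN ltnW // in E.
have -> : (F ^+ 3)`_m.+1 = ((F ^+ 3)`_m.+1 + (F ^+ 3)`_m.+1) / 2 by field.
rewrite -(subr0_eq E).
by field; rewrite !natr_fact_neq0.
Qed.

End Cauchy2.

Theorem theorem5 (C : nat -> rat) (hC : cauchy2 C) (n : nat) (hn : (1 <= n)%N) :
  \sum_(i < n.+1) \sum_(j < n.+1) \sum_(k < n.+1 | (i + j + k == n)%N)
     ((2 * n)`!)%:R / (((2 * i)`! * (2 * j)`! * (2 * k)`!)%N)%:R * C i * C j * C k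
  = (2 * n%:R - 1) * (n%:R - 1) * C n
    + n%:R * (2 * n%:R - 1) * (2 * n%:R - 3) ^+ 2 * C n.-1.
Proof.
case: n hn => // m _.
transitivity (((2 * m.+1)`!)%:R * (cauchy2_poly C m.+2 ^+ 3)`_m.+1).
  rewrite coef_poly_cube // mulr_sumr; apply: eq_bigr => i _.
  rewrite mulr_sumr; apply: eq_bigr => j _; rewrite mulr_sumr; apply: eq_bigr => k _.
  by rewrite !natrM !invfM; ring.
have fact2S : ((2 * m.+1)`!)%:R = (2 * m%:R + 2) * (2 * m%:R + 1) * ((2 * m)`!)%:R :> rat.
  by rewrite mulnS add2n !factS !natrM; ring.
have m0 : 0 <= m%:R :> rat by apply: ler0n.
have m1 : 2 * m%:R + 1 != 0 :> rat by rewrite lt0r_neq0 //; lra.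
have m2 : 2 * m%:R + 2 != 0 :> rat by rewrite lt0r_neq0 //; lra.
rewrite coef_cauchy2_poly_cube // fact2S /=.
by field; rewrite natr_fact_neq0 m1 m2.
Qed.
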